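(* Suppose $m\ge2,n\ge5$ or $m\ge5,n\ge2$, and let $\ast\in\{ss,cc,tot\}$. For every $\ell\in\mathbb{N}$ there exists $M\in\mathrm{rep}\,G_{m,n}$ such that, writing $M\cong M'\oplus X$ with $M'$ interval-decomposable and $X$ having no direct summand isomorphic to an interval representation, one has $$\|\tilde d^\ast_X\|_1:=\sum_{I\in\mathbb{I}_{m,n}}|\tilde d^\ast_X(I)|\ \ge\ \ell.$$
   Context: Fix a field $K$. For integers $m,n\ge1$, $G_{m,n}$ is the equioriented commutative $m\times n$ grid: the quiver with vertex set $\{(i,j):1\le i\le m,\ 1\le j\le n\}$ and arrows $(i,j)\to(i,j+1)$ and $(i,j)\to(i+1,j)$, bound by all commutativity relations; $\mathrm{rep}\,G_{m,n}$ is its category of finite-dimensional representations over $K$ satisfying the relations. An interval of $G_{m,n}$ is a nonempty full subquiver $I$ which is connected (as an undirected graph) and convex (whenever $x,y\in I_0$ and there are paths $x\to z$, $z\to y$ in $G_{m,n}$, then $z\in I_0$); $\mathbb{I}_{m,n}$ is the set of intervals ordered by inclusion of vertex sets. The interval representation $V_I$ has $K$ at vertices of $I$, $0$ elsewhere, identity maps on arrows inside $I$ and zero maps otherwise; interval-decomposable means isomorphic to a direct sum of interval representations. Essential vertices: $I^{ss}_0$ is the set of sources and sinks of the quiver $I$; $I^{cc}_0=I_0\cap(\mathrm{pr}_1(I^{ss}_0)\times\mathrm{pr}_2(I^{ss}_0))$ with $\mathrm{pr}_1,\mathrm{pr}_2$ coordinate projections; $I^{tot}_0=I_0$. Let $KG_{m,n}$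 be the $K$-linear category whose objects are the vertices and whose morphisms are $K$-linear combinations of paths modulo the commutativity relations; representations are $K$-linear functors $KG_{m,n}\to\mathrm{vect}_K$. For $\ast\in\{ss,cc,tot\}$, $\mathcal{C}^\ast_I$ is the full subcategory of $KG_{m,n}$ on $I^\ast_0$, and $M^\ast_I:=M|_{\mathcal{C}^\ast_I}$. The compressed multiplicity $\bar d^\ast_M(I)$ is the multiplicity of the indecomposable $(V_I)^\ast_I$ as a direct summand of $M^\ast_I$. Let $\mu$ be the Möbius function of the finite poset $\mathbb{I}_{m,n}$ ($\mu([I,I])=1$, $\mu([I,J])=-\sum_{I\le L<J}\mu([I,L])$ for $I<J$), and $\tilde d^\ast_M(I):=\sum_{J\ge I}\mu([I,J])\,\bar d^\ast_M(J)$. *)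

From HB Require Import structures.
From mathcomp Require Import all_boot all_order all_algebra.
From Stdlib Require Import Classical ClassicalEpsilon.
Set Implicit Arguments. Unset Strict Implicit. Unset Printing Implicit Defensive.
Import Order.TTheory GRing.Theory Num.Theory.
Local Open Scope ring_scope.

Section Grid.
Variables (K : fieldType) (m n : nat).

Definition vtx := ('I_m * 'I_n)%type.

Definition arrow (x y : vtx) : bool :=
  ((nat_of_ord x.1 == nat_of_ord y.1) && ((nat_of_ord x.2).+1 == nat_of_ord y.2))
  || ((nat_of_ord x.2 == nat_of_ord y.2) && ((nat_of_ord x.1).+1 == nat_of_ord y.1)).

(* existence of a path x -> y in G_{m,n} (product order) *)
Definition gle (x y : vtx) : bool :=
  ((nat_of_ord x.1 <= nat_of_ord y.1)%N && (nat_of_ord x.2 <= nat_of_ord y.2)%N).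

Definition is_interval (I : {set vtx}) : bool :=
  [&& I != set0,
      [forall x in I, forall y in I,
         connect (fun a b => [&& a \in I, b \in I & arrow a b || arrow b a]) x y]
    & [forall x in I, forall y in I, forall z,
         (gle x z && gle z y) ==> (z \in I)]].

(* A representation of KG_{m,n} = incidence category of the grid poset:
   a K-linear functor is a dimension at each vertex and a matrix for each
   pair u <= v (row-vector convention: x |-> x *m rmap u v). *)
Record rep := Rep {
  rdim : vtx -> nat;
  rmap : forall u v : vtx, 'M[K]_(rdim u, rdim v) }.

Definition is_rep (S : {set vtx}) (M : rep) : Prop :=
  (forall u, u \in S -> rmap M u u = 1%:M) /\
  (forall u v w, u \in S -> v \in S -> w \in S -> gle u v -> gle v w ->
     rmap M u v *m rmap M v w = rmap M u w).

Definition is_mor (S : {set vtx}) (M N : rep)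
  (f : forall u, 'M[K]_(rdim M u, rdim N u)) : Prop :=
  forall u v, u \in S -> v \in S -> gle u v ->
    rmap M u v *m f v = f u *m rmap N u v.

Definition iso (S : {set vtx}) (M N : rep) : Prop :=
  exists f g, @is_mor S M N f /\ @is_mor S N M g /\
    forall u, u \in S -> f u *m g u = 1%:M /\ g u *m f u = 1%:M.

Definition zero_rep : rep := @Rep (fun _ => 0%N) (fun u v => 0).

Definition dsum (M N : rep) : rep :=
  @Rep (fun u => (rdim M u + rdim N u)%N)
       (fun u v => block_mx (rmap M u v) 0 0 (rmap N u v)).

Fixpoint dpow (M : rep) (k : nat) : rep :=
  if k is k'.+1 then dsum M (dpow M k') else zero_rep.

Definition VI (I : {set vtx}) : rep :=
  @Rep (fun u => nat_of_bool (u \in I))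
       (fun u v => const_mx (gle u v)%:R).

Definition interval_decomposable (M : rep) : Prop :=
  exists s : seq {set vtx}, (forall I, I \in s -> is_interval I) /\
    iso setT M (foldr (fun I acc => dsum (VI I) acc) zero_rep s).

Definition no_interval_summand (X : rep) : Prop :=
  forall I, is_interval I -> ~ exists Y, is_rep setT Y /\ iso setT X (dsum (VI I) Y).

Definition sources (I : {set vtx}) : {set vtx} :=
  [set x in I | ~~ [exists y in I, arrow y x]].
Definition sinks (I : {set vtx}) : {set vtx} :=
  [set x in I | ~~ [exists y in I, arrow x y]].
Definition ss_vert (I : {set vtx}) : {set vtx} := sources I :|: sinks I.
Definition cc_vert (I : {set vtx}) : {set vtx} :=
  [set x in I | [exists a in ss_vert I, a.1 == x.1] && [exists b in ss_vert I, b.2 == x.2]].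

Inductive ess_kind := SS | CC | TOT.

Definition ess (k : ess_kind) (I : {set vtx}) : {set vtx} :=
  match k with SS => ss_vert I | CC => cc_vert I | TOT => I end.

Definition summand_pow (S : {set vtx}) (M V : rep) (k : nat) : Prop :=
  exists Y, is_rep S Y /\ iso S M (dsum (dpow V k) Y).
Definition is_mult (S : {set vtx}) (M V : rep) (k : nat) : Prop :=
  summand_pow S M V k /\ forall k', summand_pow S M V k' -> (k' <= k)%N.
Definition mult (S : {set vtx}) (M V : rep) : nat :=
  epsilon (inhabits 0%N) (fun k => is_mult S M V k).

Definition dbar (k : ess_kind) (M : rep) (I : {set vtx}) : nat :=
  mult (ess k I) M (VI I).

Fixpoint mu_aux (fuel : nat) (I J : {set vtx}) : int :=
  if I == J then 1 else
  if fuel is f.+1 then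
    (if I \proper J then
       - \sum_(L : {set vtx} | is_interval L && (I \subset L) && (L \proper J))
           mu_aux f I L
     else 0)
  else 0.
Definition mobius (I J : {set vtx}) : int := mu_aux #|J| I J.

Definition dtilde (k : ess_kind) (M : rep) (I : {set vtx}) : int :=
  \sum_(J : {set vtx} | is_interval J && (I \subset J))
     mobius I J * (dbar k M J)%:Z.

Definition l1norm_dtilde (k : ess_kind) (M : rep) : nat :=
  (\sum_(I : {set vtx} | is_interval I) `|dtilde k M I|%N)%N.

End Grid.

(* The witness is X^l, where X is the "brick" placed on a 2 x 3 window in a corner of the
   grid: dimension vector 0 1 1 / 1 2 1, and at the centre w the images of the two incoming
   maps and the kernel of the outgoing map are three distinct lines.  Every endomorphism of X
   is a scalar, and one factoring through an interval module has rank <= 1 at w, hence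
   vanishes; so X^l has no interval summand and any decomposition X^l ~= M' (+) X' with M'
   interval-decomposable has X' ~= X^l.  On a vertex set avoiding the corner source a or the
   centre w, X splits as V_I (+) (simple at w).  For ss take I = supp X, whose sources and
   sinks avoid w; for cc and tot take I = supp X minus a.  Then the compressed multiplicity of
   I is at least l while it vanishes on every larger interval (such an interval has a source
   outside supp X, or is supp X itself, whose essential vertices contain w), so the Moebius
   inversion at I equals that multiplicity. *)

From HB Require Import structures.
From mathcomp Require Import all_boot all_order all_algebra zify.
From Stdlib Require Import ClassicalEpsilon FunctionalExtensionality PropExtensionality.
Set Implicit Arguments. Unset Strict Implicit. Unset Printing Implicit Defensive.
Import Order.TTheory GRing.Theory Num.Theory.

Section GridOrder.
Variables (m n : nat).
Implicit Types (x y z : vtx m n) (J : {set vtx m n}).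

Lemma gle_trans y x z : gle x y -> gle y z -> gle x z.
Proof. by rewrite /gle => /andP [? ?] /andP [? ?]; apply/andP; split; lia. Qed.

Lemma arrow_gle x y : arrow x y -> gle x y /\ (x.1 + x.2).+1 = (y.1 + y.2)%N.
Proof. by rewrite /arrow /gle => /orP [] /andP [/eqP <- /eqP <-]; split; lia. Qed.

Lemma gle_anti x y : gle x y -> gle y x -> x = y.
Proof.
case: x y => [a b] [c d]; rewrite /gle /= => /andP [ac bd] /andP [ca db].
by congr pair; apply: val_inj; apply/eqP; rewrite eqn_leq ?ac ?ca ?bd ?db.
Qed.

Lemma exists_source_le J x : x \in J -> exists2 z, z \in sources J & gle z x.
Proof.
move=> xJ; have xx : (x \in J) && gle x x by rewrite xJ /gle !leqnn.
have [z /andP [zJ zx] z_min] :=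
  @arg_minnP _ x (fun z => (z \in J) && gle z x) (fun z : vtx m n => (z.1 + z.2)%N) xx.
exists z => //; rewrite inE zJ /=; apply/negP => /exists_inP [y yJ /arrow_gle [yz yzS]].
by have := z_min y; rewrite yJ (gle_trans yz zx) -yzS => /(_ isT); lia.
Qed.

Lemma ess_subset k J : ess k J \subset J.
Proof.
apply/subsetP => z; case: k => //=; rewrite !inE; last by case/andP.
by case/orP => /andP [].
Qed.

Lemma ss_vert_ess k J : ss_vert J \subset ess k J.
Proof.
apply/subsetP => z z_ss; have zJ := subsetP (ess_subset SS J) z z_ss.
case: k => //=; rewrite inE zJ /=.
by apply/andP; split; apply/exists_inP; exists z; rewrite ?z_ss ?eqxx.
Qed.

Lemma is_interval_up (I : {set vtx m n}) t : t \in I ->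
  (forall x, x \in I -> connect (fun a b => [&& a \in I, b \in I & arrow a b || arrow b a]) x t) ->
  (forall x z, x \in I -> gle x z -> z \in I) -> is_interval I.
Proof.
move=> tI to_t I_gle; pose R a b := [&& a \in I, b \in I & arrow a b || arrow b a].
have R_sym : symmetric R by move=> a b; rewrite /R andbCA orbC.
apply/and3P; split; first by apply/set0Pn; exists t.
  apply/forall_inP => x xI; apply/forall_inP => y yI.
  by rewrite (connect_trans (to_t x xI)) // (sym_connect_sym R_sym) to_t.
apply/forall_inP => x xI; apply/forall_inP => y yI; apply/forallP => z.
by apply/implyP => /andP [xz _]; apply: I_gle xz.
Qed.

End GridOrder.

Section Representations.
Local Open Scope ring_scope.
Variables (K : fieldType) (m n : nat).
Notation rep := (rep K m n).
Notation vtx := (vtx m n).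
Implicit Types (S : {set vtx}) (A B C D M N X Y V : rep).

Lemma is_mor_comp S A B C f g : @is_mor K m n S A B f -> @is_mor K m n S B C g ->
  @is_mor K m n S A C (fun u => f u *m g u).
Proof. by move=> Hf Hg u v Hu Hv Huv; rewrite mulmxA Hf // -mulmxA Hg // mulmxA. Qed.

Lemma iso_refl S A : iso S A A.
Proof.
exists (fun u => 1%:M), (fun u => 1%:M).
by split; [|split] => [u v _ _ _|u v _ _ _|u _]; rewrite ?mulmx1 ?mul1mx.
Qed.

Lemma iso_sym S A B : iso S A B -> iso S B A.
Proof.
case=> f [g [Hf [Hg fgK]]]; exists g, f; do 2!split=> //.
by move=> u Hu; case: (fgK u Hu).
Qed.

Lemma iso_trans S A B C : iso S A B -> iso S B C -> iso S A C.
Proof.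
case=> f [g [Hf [Hg fgK]]] [f' [g' [Hf' [Hg' fgK']]]].
exists (fun u => f u *m f' u), (fun u => g' u *m g u).
split; [exact: is_mor_comp | split; first exact: is_mor_comp].
move=> u Hu; case: (fgK u Hu) => fg gf; case: (fgK' u Hu) => fg' gf'.
by rewrite !mulmxA -(mulmxA (f u)) -(mulmxA (g' u)) fg' gf mulmx1 mulmx1.
Qed.

Lemma iso_subset S S' A B : S' \subset S -> iso S A B -> iso S' A B.
Proof.
move=> /subsetP sS [f [g [Hf [Hg fgK]]]]; exists f, g.
by split; [|split] => [u v /sS Hu /sS Hv|u v /sS Hu /sS Hv|u /sS Hu]; auto.
Qed.

Lemma is_rep_subset S S' A : S' \subset S -> is_rep S A -> is_rep S' A.
Proof.
by move=> /subsetP sS [id_A comp_A]; split=> [u /sS|u v w /sS Hu /sS Hv /sS Hw]; auto.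
Qed.

Lemma is_rep_zero S : is_rep S (zero_rep K m n).
Proof. by split=> *; rewrite flatmx0 [RHS]flatmx0. Qed.

Lemma is_rep_dsum S A B : is_rep S A -> is_rep S B -> is_rep S (dsum A B).
Proof.
case=> idA compA [idB compB]; split=> [u Hu|u v w Hu Hv Hw Huv Hvw] /=.
  by rewrite idA // idB // -scalar_mx_block.
by rewrite mulmx_block !mulmx0 !mul0mx !addr0 !add0r compA // compB.
Qed.

Lemma is_rep_dpow S A k : is_rep S A -> is_rep S (dpow A k).
Proof. by move=> HA; elim: k => [|k IH] /=; [exact: is_rep_zero | exact: is_rep_dsum]. Qed.

Lemma iso_dsum S A A' B B' : iso S A A' -> iso S B B' -> iso S (dsum A B) (dsum A' B').
Proof.
case=> f [g [Hf [Hg fgK]]] [f' [g' [Hf' [Hg' fgK']]]].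
exists (fun u => block_mx (f u) 0 0 (f' u)), (fun u => block_mx (g u) 0 0 (g' u)).
split; [|split] => [u v Hu Hv Huv|u v Hu Hv Huv|u Hu] /=;
  rewrite !mulmx_block !mulmx0 !mul0mx !addr0 !add0r.
- by rewrite Hf // Hf'.
- by rewrite Hg // Hg'.
case: (fgK u Hu) (fgK' u Hu) => -> -> [-> ->].
by rewrite -!scalar_mx_block.
Qed.

Lemma iso_dsum0r S A : iso S A (dsum (zero_rep K m n) A).
Proof.
exists (fun u => (row_mx (0 : 'M_(rdim A u, 0)) 1%:M : 'M_(rdim A u, 0 + rdim A u))).
exists (fun u => (col_mx (0 : 'M_(0, rdim A u)) 1%:M : 'M_(0 + rdim A u, rdim A u))).
split; [|split] => [u v _ _ _|u v _ _ _|u _] /=.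
- by rewrite mul_mx_row mul_row_block ?mulmx0 ?mul0mx ?mulmx1 ?mul1mx ?add0r ?addr0.
- by rewrite !mul_col_mx !mul_row_col ?mulmx0 ?mul0mx ?mulmx1 ?mul1mx ?add0r ?addr0.
rewrite mul_row_col mul_col_row !mulmx0 !mul0mx mulmx1 add0r; split=> //.
by rewrite [in RHS]scalar_mx_block [(1%:M : 'M_0)]flatmx0.
Qed.

Definition exchange_mx (R : pzSemiRingType) a b c d : 'M[R]_(a + b + (c + d), a + c + (b + d)) :=
  block_mx (block_mx 1%:M 0 0 0) (block_mx 0 0 1%:M 0) (block_mx 0 1%:M 0 0) (block_mx 0 0 0 1%:M).

Lemma iso_dsumACA S A B C D :
  iso S (dsum (dsum A B) (dsum C D)) (dsum (dsum A C) (dsum B D)).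
Proof.
exists (fun u => exchange_mx K _ _ _ _), (fun u => exchange_mx K _ _ _ _).
split; [|split] => [u v _ _ _|u v _ _ _|u _];
  rewrite /exchange_mx !mulmx_block ?mulmx0 ?mul0mx ?mulmx1 ?mul1mx ?addr0 ?add0r //.
by rewrite !add_block_mx ?addr0 ?add0r !block_mx0 -!scalar_mx_block.
Qed.

Lemma iso_dpow_dsum S X V Y k : iso S X (dsum V Y) ->
  iso S (dpow X k) (dsum (dpow V k) (dpow Y k)).
Proof.
move=> H; elim: k => [|k IH] /=; first exact: iso_dsum0r.
exact: iso_trans (iso_dsum H IH) (iso_dsumACA _ _ _ _ _).
Qed.

Definition retract S V N := exists i p, [/\ @is_mor K m n S V N i, @is_mor K m n S N V p &
  forall u, u \in S -> i u *m p u = 1%:M].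

Lemma retract_dsuml S V Y : retract S V (dsum V Y).
Proof.
exists (fun u => row_mx (1%:M : 'M_(rdim V u)) (0 : 'M_(rdim V u, rdim Y u))).
exists (fun u => col_mx (1%:M : 'M_(rdim V u)) (0 : 'M_(rdim Y u, rdim V u))).
split=> [u v _ _ _|u v _ _ _|u _] /=.
- by rewrite mul_mx_row mul_row_block ?mulmx0 ?mul0mx ?mulmx1 ?mul1mx ?addr0 ?add0r.
- by rewrite !mul_col_mx !mul_row_col ?mulmx0 ?mul0mx ?mulmx1 ?mul1mx ?addr0 ?add0r.
- by rewrite mul_row_col mulmx1 mulmx0 addr0.
Qed.

Lemma retract_dsumlW S V A Y : retract S V A -> retract S V (dsum A Y).
Proof.
case=> i [p [Hi Hp ipK]].
exists (fun u => row_mx (i u) (0 : 'M_(rdim V u, rdim Y u))).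
exists (fun u => col_mx (p u) (0 : 'M_(rdim Y u, rdim V u))).
split=> [u v Hu Hv Huv|u v Hu Hv Huv|u Hu] /=.
- by rewrite mul_mx_row mul_row_block Hi // ?mulmx0 ?mul0mx ?addr0 ?add0r.
- by rewrite !mul_col_mx !mul_row_col Hp // ?mulmx0 ?mul0mx ?addr0 ?add0r.
- by rewrite mul_row_col mulmx0 addr0 ipK.
Qed.

Lemma retract_iso S V M N : iso S M N -> retract S V N -> retract S V M.
Proof.
case=> f [g [Hf [Hg fgK]]] [i [p [Hi Hp ipK]]].
exists (fun u => i u *m g u), (fun u => f u *m p u).
split=> [||u Hu]; try exact: is_mor_comp.
by case: (fgK u Hu) => _ gf; rewrite mulmxA -(mulmxA (i u)) gf mulmx1 ipK.
Qed.

Definition VI_null_through S X J := forall i p,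
  @is_mor K m n S (VI K J) X i -> @is_mor K m n S X (VI K J) p ->
  forall u, u \in S -> i u *m p u = 0.

Lemma VI_null_through0 S J : VI_null_through S (zero_rep K m n) J.
Proof. by move=> i p _ _ u _; rewrite [i u]thinmx0 mul0mx. Qed.

Lemma VI_null_throughD S X Y J :
  VI_null_through S X J -> VI_null_through S Y J -> VI_null_through S (dsum X Y) J.
Proof.
move=> nX nY i p Hi Hp u Hu.
have [i_l i_r] : @is_mor K m n S (VI K J) X (fun a => lsubmx (i a)) /\
                 @is_mor K m n S (VI K J) Y (fun a => rsubmx (i a)).
  split=> a b Ha Hb Hab; have := Hi a b Ha Hb Hab;
    rewrite -[i b]hsubmxK -[i a]hsubmxK mul_mx_row mul_row_block /=;
    by rewrite ?mulmx0 ?mul0mx ?addr0 ?add0r ?row_mxKl ?row_mxKr => /eq_row_mx [].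
have [p_u p_d] : @is_mor K m n S X (VI K J) (fun a => usubmx (p a)) /\
                 @is_mor K m n S Y (VI K J) (fun a => dsubmx (p a)).
  split=> a b Ha Hb Hab; have := Hp a b Ha Hb Hab;
    rewrite -[p b]vsubmxK -[p a]vsubmxK /= !mul_col_mx !mul_row_col;
    by rewrite ?mulmx0 ?mul0mx ?addr0 ?add0r ?col_mxKu ?col_mxKd => /eq_col_mx [].
by rewrite -[i u]hsubmxK -[p u]vsubmxK mul_row_col (nX _ _ i_l p_u) // (nY _ _ i_r p_d) // addr0.
Qed.

Lemma VI_null_through_dpow S X J k : VI_null_through S X J -> VI_null_through S (dpow X k) J.
Proof.
by move=> nX; elim: k => [|k IH] /=; [exact: VI_null_through0 | exact: VI_null_throughD].
Qed.

Lemma VI_null_through_retract S X J u : VI_null_through S X J -> u \in S -> u \in J ->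
  ~ retract S (VI K J) X.
Proof.
move=> nX Hu HuJ [i [p [Hi Hp ipK]]].
have uJ : (0 < rdim (VI K J) u)%N by rewrite /= HuJ.
have := congr1 (fun M : 'M_(rdim (VI K J) u) => M (Ordinal uJ) (Ordinal uJ)) (ipK u Hu).
by rewrite /= nX // !mxE eqxx => /esym/eqP; rewrite oner_eq0.
Qed.

Lemma mx_inv_dim a b (f : 'M[K]_(a, b)) (g : 'M_(b, a)) :
  f *m g = 1%:M -> g *m f = 1%:M -> a = b.
Proof.
move=> fg gf; apply/eqP; rewrite eqn_leq.
rewrite -{1}(mxrank1 K a) -{2}(mxrank1 K b) -fg -gf.
by rewrite !(leq_trans (mxrankM_maxl _ _) (rank_leq_col _)).
Qed.

Lemma rdim_dpow V k u : rdim (dpow V k) u = (k * rdim V u)%N.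
Proof. by elim: k => [|k IH] //=; rewrite IH mulSn. Qed.

Lemma summand_pow_leq S M J k u : summand_pow S M (VI K J) k -> u \in S -> u \in J ->
  (k <= rdim M u)%N.
Proof.
case=> Y [_ [f [g [_ [_ fgK]]]]] Hu HuJ; case: (fgK u Hu) => fg gf.
by rewrite (mx_inv_dim fg gf) /= rdim_dpow /= HuJ muln1 leq_addr.
Qed.

Lemma ex_max_prop (P : nat -> Prop) (b : nat) : P 0%N -> (forall k, P k -> (k <= b)%N) ->
  exists k, P k /\ forall k', P k' -> (k' <= k)%N.
Proof.
move=> P0 Pb; pose p : pred nat := fun k => excluded_middle_informative (P k).
have pP k : reflect (P k) (p k) by rewrite /p; case: excluded_middle_informative; constructor.
have exP : exists k, p k by exists 0%N; apply/pP.
have ubP k : p k -> (k <= b)%N by move/pP/Pb.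
case: (ex_maxnP exP ubP) => k /pP Pk k_max.
by exists k; split=> // k' /pP /k_max.
Qed.

Lemma is_mult_mult S M V (b : nat) : is_rep S M ->
  (forall k, summand_pow S M V k -> (k <= b)%N) -> is_mult S M V (mult S M V).
Proof.
move=> HM Hb; apply: (epsilon_spec (inhabits 0%N) (fun k => is_mult S M V k)).
by apply: ex_max_prop Hb; exists M; split=> //; exact: iso_dsum0r.
Qed.

Lemma is_mult_dbar k M J u : is_rep setT M -> u \in ess k J ->
  is_mult (ess k J) M (VI K J) (dbar k M J).
Proof.
move=> HM Hu; apply: (is_mult_mult (b := rdim M u)); first exact: is_rep_subset (subsetT _) HM.
by move=> k' /summand_pow_leq; apply=> //; apply: (subsetP (ess_subset k J)).
Qed.

Lemma dbar_eq0_rdim k M J u : is_rep setT M -> u \in ess k J -> rdim M u = 0%N ->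
  dbar k M J = 0%N.
Proof.
move=> HM Hu M_u; have [/summand_pow_leq dbar_le _] := is_mult_dbar HM Hu.
by apply/eqP; rewrite -leqn0 -M_u dbar_le // (subsetP (ess_subset k J)).
Qed.

Lemma summand_pow_leq_dbar k M J l : is_rep setT M -> ess k J != set0 ->
  summand_pow (ess k J) M (VI K J) l -> (l <= dbar k M J)%N.
Proof. by move=> HM /set0Pn [u Hu]; case: (is_mult_dbar HM Hu) => _; apply. Qed.

Lemma dbar_eq0_null k M J : is_rep setT M -> ess k J != set0 ->
  VI_null_through (ess k J) M J -> dbar k M J = 0%N.
Proof.
move=> HM /set0Pn [u Hu] nM; have [] := is_mult_dbar HM Hu.
rewrite /dbar; case: (mult _ _ _) => [//|k'] [Y [_ Hiso]] _; exfalso.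
apply: (VI_null_through_retract nM Hu (subsetP (ess_subset k J) u Hu)).
exact/(retract_iso Hiso)/retract_dsumlW/retract_dsuml.
Qed.

Lemma dbar_iso k X M I : iso setT X M -> dbar k X I = dbar k M I.
Proof.
move=> XM; have XM_I := iso_subset (subsetT (ess k I)) XM.
have summand j : summand_pow (ess k I) X (VI K I) j <-> summand_pow (ess k I) M (VI K I) j.
  split=> -[Y [HY iso_Y]]; exists Y; split=> //.
  - exact: iso_trans (iso_sym XM_I) iso_Y.
  - exact: iso_trans XM_I iso_Y.
rewrite /dbar /mult; congr (epsilon _); apply: functional_extensionality => j.
apply: propositional_extensionality.
by split=> -[/summand Hj j_max]; split=> // j' /summand /j_max.
Qed.

Lemma dtilde_leq_l1norm k M I : is_interval I -> (`|dtilde k M I| <= l1norm_dtilde k M)%N.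
Proof. by move=> HI; rewrite /l1norm_dtilde (bigD1 I) //= leq_addr. Qed.

Lemma l1norm_dtilde_iso k X M : iso setT X M -> l1norm_dtilde k X = l1norm_dtilde k M.
Proof.
move=> XM; apply: eq_bigr => I _; congr (absz _).
by apply: eq_bigr => J _; rewrite (dbar_iso _ _ XM).
Qed.

(* Only the diagonal term [mobius I I = 1] of the Moebius inversion at [I] survives. *)
Lemma dbar_leq_l1norm_dtilde k M I : is_interval I ->
  (forall J, is_interval J -> I \proper J -> dbar k M J = 0%N) ->
  (dbar k M I <= l1norm_dtilde k M)%N.
Proof.
move=> HI dbar_above; apply: leq_trans (dtilde_leq_l1norm k M HI).
rewrite /dtilde (bigD1 I) /=; last by rewrite HI subxx.
rewrite big1 ?addr0 => [|J /andP [/andP [HJ sIJ] JI]].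
  by rewrite /mobius; case: #|I| => [|f] /=; rewrite eqxx mul1r absz_nat.
by rewrite dbar_above ?mulr0 // properEneq eq_sym JI.
Qed.

Lemma no_interval_summand_null X : (forall J, is_interval J -> VI_null_through setT X J) ->
  no_interval_summand X.
Proof.
move=> nX I I_int [Y [_ iso_Y]]; have /and3P [/set0Pn [u uI] _ _] := I_int.
apply: (VI_null_through_retract (nX I I_int) (in_setT u) uI).
exact: retract_iso iso_Y (retract_dsuml _ _ _).
Qed.

(* An interval summand of [M'] would be a retract of [M]. *)
Lemma iso_dsum_interval_decomposable M M' X :
  (forall J, is_interval J -> VI_null_through setT M J) ->
  iso setT M (dsum M' X) -> interval_decomposable M' -> iso setT X M.
Proof.
move=> nM iso_M [[|J Js] [Js_int iso_M']].
  apply: iso_sym (iso_trans iso_M (iso_trans (iso_dsum iso_M' (iso_refl _ X)) _)).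
  exact: iso_sym (iso_dsum0r _ X).
have /and3P [/set0Pn [u uJ] _ _] := Js_int J (mem_head _ _).
case: (VI_null_through_retract (nM J (Js_int J (mem_head _ _))) (in_setT u) uJ).
apply: retract_iso iso_M _; apply: retract_dsumlW.
exact: retract_iso iso_M' (retract_dsuml _ _ _).
Qed.

End Representations.

(* The brick lives on the window of the last two rows and last three columns; with [s] set,
   rows and columns swap roles, which covers the grids with only two columns. *)
Section Window.
Variables (m n : nat) (s : bool).
Implicit Types (u v : vtx m n).

Definition nrows := if s then n else m.
Definition ncols := if s then m else n.
Definition rowc u : nat := if s then nat_of_ord u.2 else nat_of_ord u.1.
Definition colc u : nat := if s then nat_of_ord u.1 else nat_of_ord u.2.

Definition win u := (nrows - 2 <= rowc u)%N && (ncols - 3 <= colc u)%N.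
Definition wrow u := (rowc u - (nrows - 2))%N.
Definition wcol u := (colc u - (ncols - 3))%N.

Lemma gle_rowc u v : gle u v = (rowc u <= rowc v)%N && (colc u <= colc v)%N.
Proof. by rewrite /gle /rowc /colc; case: s; rewrite // andbC. Qed.

Lemma arrow_rowc u v : arrow u v =
  ((rowc u == rowc v) && ((colc u).+1 == colc v)) ||
  ((colc u == colc v) && ((rowc u).+1 == rowc v)).
Proof. by rewrite /arrow /rowc /colc; case: s; rewrite // orbC. Qed.

Lemma rowc_lt u : (rowc u < nrows)%N. Proof. by rewrite /rowc /nrows; case: s. Qed.
Lemma colc_lt u : (colc u < ncols)%N. Proof. by rewrite /colc /ncols; case: s. Qed.

Lemma wrow_lt u : win u -> (wrow u < 2)%N.
Proof. by have := rowc_lt u; rewrite /win /wrow => ? /andP [? ?]; lia. Qed.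
Lemma wcol_lt u : win u -> (wcol u < 3)%N.
Proof. by have := colc_lt u; rewrite /win /wcol => ? /andP [? ?]; lia. Qed.

Lemma rowcE u : win u -> rowc u = (nrows - 2 + wrow u)%N.
Proof. by rewrite /win /wrow => /andP [? ?]; lia. Qed.
Lemma colcE u : win u -> colc u = (ncols - 3 + wcol u)%N.
Proof. by rewrite /win /wcol => /andP [? ?]; lia. Qed.

Lemma win_gle u v : win u -> gle u v -> win v.
Proof. by rewrite gle_rowc /win => /andP [? ?] /andP [? ?]; apply/andP; split; lia. Qed.

Lemma gle_win u v : win u -> win v -> gle u v = (wrow u <= wrow v)%N && (wcol u <= wcol v)%N.
Proof.
by move=> wu wv; rewrite gle_rowc (rowcE wu) (rowcE wv) (colcE wu) (colcE wv) !leq_add2l.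
Qed.

Lemma gle_wcoord u v : win u -> gle u v -> (wrow u <= wrow v)%N && (wcol u <= wcol v)%N.
Proof. by move=> wu uv; rewrite -gle_win // (win_gle wu uv). Qed.

Lemma arrow_win u v : win u -> win v -> arrow u v =
  ((wrow u == wrow v) && ((wcol u).+1 == wcol v)) ||
  ((wcol u == wcol v) && ((wrow u).+1 == wrow v)).
Proof.
move=> wu wv; rewrite arrow_rowc (rowcE wu) (rowcE wv) (colcE wu) (colcE wv).
by rewrite !eqn_add2l -!addnS !eqn_add2l.
Qed.

Lemma win_inj u v : win u -> win v -> wrow u = wrow v -> wcol u = wcol v -> u = v.
Proof.
move=> wu wv er ec; have /eqP := rowcE wu; have /eqP := colcE wu.
rewrite er ec -(colcE wv) -(rowcE wv) /rowc /colc.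
by case: u v {wu wv er ec} => [a b] [c d]; case: s => /eqP /val_inj /= -> /eqP /val_inj ->.
Qed.

Hypotheses (rows_ge2 : (2 <= nrows)%N) (cols_ge3 : (3 <= ncols)%N).

Lemma cc_vert_rowc (I : {set vtx m n}) x : x \in I ->
  (exists2 a, a \in ss_vert I & rowc a = rowc x) ->
  (exists2 b, b \in ss_vert I & colc b = colc x) -> x \in cc_vert I.
Proof.
move=> xI [a aI ra] [b bI cb]; rewrite inE xI /=.
by move: ra cb; rewrite /rowc /colc; case: s => ra cb; apply/andP; split; apply/exists_inP;
  [exists b | exists a | exists a | exists b]; rewrite // -val_eqE /= ?ra ?cb.
Qed.

Lemma m_gt0 : (0 < m)%N.
Proof. by move: rows_ge2 cols_ge3; rewrite /nrows /ncols; case: s; lia. Qed.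
Lemma n_gt0 : (0 < n)%N.
Proof. by move: rows_ge2 cols_ge3; rewrite /nrows /ncols; case: s; lia. Qed.

Definition wpt (r c : nat) : vtx m n :=
  let i := (nrows - 2 + r)%N in let j := (ncols - 3 + c)%N in
  (insubd (Ordinal m_gt0) (if s then j else i), insubd (Ordinal n_gt0) (if s then i else j)).

Lemma wptE r c : (r < 2)%N -> (c < 3)%N ->
  [/\ win (wpt r c), wrow (wpt r c) = r & wcol (wpt r c) = c].
Proof.
move=> r2 c3; have ri : (nrows - 2 + r < nrows)%N by lia.
have cj : (ncols - 3 + c < ncols)%N by lia.
suff [rE cE] : rowc (wpt r c) = (nrows - 2 + r)%N /\ colc (wpt r c) = (ncols - 3 + c)%N.
  by rewrite /win /wrow /wcol rE cE; split; [apply/andP; split|..]; lia.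
by move: ri cj; rewrite /rowc /colc /wpt /nrows /ncols; case: s => ri cj;
  rewrite /= !val_insubd ri cj.
Qed.

Lemma win_wpt u : win u -> u = wpt (wrow u) (wcol u).
Proof.
move=> wu; have [wp rp cp] := wptE (wrow_lt wu) (wcol_lt wu).
exact: win_inj.
Qed.

End Window.

Definition brick_dim (r c : nat) : nat :=
  match r, c with 0, 1 | 0, 2 | 1, 0 | 1, 2 => 1 | 1, 1 => 2 | _, _ => 0 end.

(* Coefficients of the structure map from window position (r, c) to (r', c').  At the
   centre (1, 1) the image of (1, 0), the image of (0, 1) and the kernel of the map to
   (1, 2) are the three distinct lines <e0>, <e0 + e1> and <e1>. *)
Definition brick_coef (r c r' c' i j : nat) : nat :=
  if (r == r') && (c == c') then nat_of_bool (i == j) else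
  match r, c, r', c' with
  | 0, 1, 0, 2 | 0, 1, 1, 1 | 0, 1, 1, 2 | 0, 2, 1, 2 | 1, 0, 1, 2 => 1
  | 1, 0, 1, 1 => nat_of_bool (j == 0)
  | 1, 1, 1, 2 => nat_of_bool (i == 0)
  | _, _, _, _ => 0
  end.

Lemma brick_dim_le2 r c : (brick_dim r c <= 2)%N.
Proof. by case: r => [|[|r]] //; case: c => [|[|[|c]]]. Qed.

Lemma all_iota0P (P : pred nat) b k : all P (iota 0 b) -> (k < b)%N -> P k.
Proof. by move=> /allP Pb kb; apply: Pb; rewrite mem_iota. Qed.

Definition brick_comp_table : bool :=
  all (fun r1 => all (fun c1 => all (fun r2 => all (fun c2 => all (fun r3 => all (fun c3 =>
  all (fun i => all (fun j =>
   (i < brick_dim r1 c1) ==> (j < brick_dim r3 c3) ==> (r1 <= r2 <= r3) ==> (c1 <= c2 <= c3) ==>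
   (sumn [seq brick_coef r1 c1 r2 c2 i k * brick_coef r2 c2 r3 c3 k j
           | k <- iota 0 (brick_dim r2 c2)]
     == brick_coef r1 c1 r3 c3 i j))%N
  (iota 0 2)) (iota 0 2)) (iota 0 3)) (iota 0 2)) (iota 0 3)) (iota 0 2)) (iota 0 3)) (iota 0 2).

Lemma brick_comp_tableT : brick_comp_table. Proof. by vm_compute. Qed.

Local Open Scope ring_scope.

Lemma brick_coef_comp (R : pzSemiRingType) r1 c1 r2 c2 r3 c3 i j d :
  (r1 < 2)%N -> (c1 < 3)%N -> (r2 < 2)%N -> (c2 < 3)%N -> (r3 < 2)%N -> (c3 < 3)%N ->
  (i < brick_dim r1 c1)%N -> (j < brick_dim r3 c3)%N ->
  (r1 <= r2 <= r3)%N -> (c1 <= c2 <= c3)%N -> d = brick_dim r2 c2 ->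
  \sum_(k < d) ((brick_coef r1 c1 r2 c2 i k)%:R * (brick_coef r2 c2 r3 c3 k j)%:R : R)
    = (brick_coef r1 c1 r3 c3 i j)%:R.
Proof.
move=> r1b c1b r2b c2b r3b c3b ib jb r12 c12 ->.
have i2 := leq_trans ib (brick_dim_le2 r1 c1); have j2 := leq_trans jb (brick_dim_le2 r3 c3).
under eq_bigr do rewrite -natrM; rewrite -natr_sum; congr (_%:R).
move: brick_comp_tableT => /all_iota0P /(_ r1b) /all_iota0P /(_ c1b) /all_iota0P /(_ r2b)
  /all_iota0P /(_ c2b) /all_iota0P /(_ r3b) /all_iota0P /(_ c3b) /all_iota0P /(_ i2)
  /all_iota0P /(_ j2); rewrite ib jb r12 c12 /= => /eqP <-.
have -> : iota 0 (brick_dim r2 c2) = index_iota 0 (brick_dim r2 c2) by rewrite /index_iota subn0.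
by rewrite sumnE big_map big_mkord.
Qed.

Local Close Scope ring_scope.

Definition brick_split_table : bool :=
  all (fun r1 => all (fun c1 => all (fun r2 => all (fun c2 => all (fun i => all (fun j =>
   (brick_dim r1 c1 != 0) ==> (brick_dim r2 c2 != 0) ==> (r1 <= r2) ==> (c1 <= c2) ==>
   ~~ [&& r1 == 0, c1 == 1, r2 == 1 & c2 == 1] ==>
   (i < brick_dim r1 c1) ==> (j < brick_dim r2 c2) ==>
   (brick_coef r1 c1 r2 c2 i j == (i == j)))
  (iota 0 2)) (iota 0 2)) (iota 0 3)) (iota 0 2)) (iota 0 3)) (iota 0 2).

Lemma brick_split_tableT : brick_split_table. Proof. by vm_compute. Qed.

Lemma brick_coef_delta r1 c1 r2 c2 i j : (r1 < 2) -> (c1 < 3) -> (r2 < 2) -> (c2 < 3) ->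
  brick_dim r1 c1 != 0 -> brick_dim r2 c2 != 0 -> (r1 <= r2) -> (c1 <= c2) ->
  ~~ [&& r1 == 0, c1 == 1, r2 == 1 & c2 == 1] -> (i < brick_dim r1 c1) -> (j < brick_dim r2 c2) ->
  brick_coef r1 c1 r2 c2 i j = (i == j).
Proof.
move=> r1b c1b r2b c2b d1 d2 r12 c12 not_aw ib jb.
have i2 := leq_trans ib (brick_dim_le2 r1 c1); have j2 := leq_trans jb (brick_dim_le2 r2 c2).
move: brick_split_tableT => /all_iota0P /(_ r1b) /all_iota0P /(_ c1b) /all_iota0P /(_ r2b)
  /all_iota0P /(_ c2b) /all_iota0P /(_ i2) /all_iota0P /(_ j2).
by rewrite d1 d2 r12 c12 not_aw ib jb => /eqP.
Qed.

Section Entrywise.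
Local Open Scope ring_scope.
Variables (K : fieldType) (m n : nat).
Notation rep := (rep K m n).
Notation vtx := (vtx m n).

Lemma sum_delta_r d (F : 'I_d -> K) j (jd : (j < d)%N) :
  \sum_(k < d) F k * ((k : nat) == j)%:R = F (Ordinal jd).
Proof.
rewrite (bigD1 (Ordinal jd)) //= eqxx mulr1 big1 ?addr0 // => k kj.
by rewrite (_ : (k : nat) == j = false) ?mulr0 //; apply: contraNF kj => /eqP kj; apply/eqP/val_inj.
Qed.

Lemma sum_delta_l d (F : 'I_d -> K) i (id : (i < d)%N) :
  \sum_(k < d) (i == k :> nat)%:R * F k = F (Ordinal id).
Proof.
rewrite (bigD1 (Ordinal id)) //= eqxx mul1r big1 ?addr0 // => k ki.
by rewrite (_ : i == k :> nat = false) ?mul0r //; apply: contraNF ki => /eqP ik; apply/eqP/val_inj.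
Qed.

Lemma ord_bool (b : bool) (k : 'I_b) : k = 0 :> nat.
Proof. by have := ltn_ord k; have := leq_b1 b; lia. Qed.

Lemma is_rep_VI (S I : {set vtx}) :
  (forall x y z, x \in I -> y \in I -> gle x z -> gle z y -> z \in I) -> is_rep S (VI K I).
Proof.
move=> convI; split=> [u _|u v w _ _ _ uv vw]; apply/matrixP => i j; rewrite !mxE.
  have -> : i = j by apply: val_inj; rewrite /= (ord_bool i) (ord_bool j).
  by rewrite /gle !leqnn eqxx.
have uI : u \in I by have := leq_ltn_trans (leq0n i) (ltn_ord i); rewrite /= lt0b.
have wI : w \in I by have := leq_ltn_trans (leq0n j) (ltn_ord j); rewrite /= lt0b.
under eq_bigr do rewrite !mxE.
by rewrite sumr_const card_ord /= (convI _ _ _ uI wI uv vw) uv vw (gle_trans uv vw) mulr1.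
Qed.

(* The identity maps are written entrywise because the dimensions only agree on [S]. *)
Lemma iso_entrywise (S : {set vtx}) (X N : rep) :
  (forall u, u \in S -> rdim X u = rdim N u) ->
  (forall u v, u \in S -> v \in S -> gle u v ->
     forall (i : 'I_(rdim X u)) (j : 'I_(rdim X v)) (i' : 'I_(rdim N u)) (j' : 'I_(rdim N v)),
     i = i' :> nat -> j = j' :> nat -> rmap X u v i j = rmap N u v i' j') ->
  iso S X N.
Proof.
move=> dimXN entXN.
exists (fun u => \matrix_(i < rdim X u, j < rdim N u) ((i : nat) == j)%:R).
exists (fun u => \matrix_(i < rdim N u, j < rdim X u) ((i : nat) == j)%:R).
split; [|split] => [u v Hu Hv uv|u v Hu Hv uv|u Hu].
- apply/matrixP => i j; rewrite !mxE.
  under eq_bigr do rewrite mxE; under [RHS]eq_bigr do rewrite mxE.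
  have jX : (j < rdim X v)%N by rewrite dimXN.
  have iN : (i < rdim N u)%N by rewrite -dimXN.
  by rewrite (sum_delta_r _ jX) (sum_delta_l _ iN); apply: entXN.
- apply/matrixP => i j; rewrite !mxE.
  under eq_bigr do rewrite mxE; under [RHS]eq_bigr do rewrite mxE.
  have jN : (j < rdim N v)%N by rewrite -dimXN.
  have iX : (i < rdim X u)%N by rewrite dimXN.
  by rewrite (sum_delta_r _ jN) (sum_delta_l _ iX); symmetry; apply: entXN.
have iXN (i : 'I_(rdim X u)) : (i < rdim N u)%N by rewrite -dimXN.
have iNX (i : 'I_(rdim N u)) : (i < rdim X u)%N by rewrite dimXN.
by split; apply/matrixP => i j; rewrite !mxE; under eq_bigr do rewrite !mxE;
  rewrite sum_delta_l // mxE.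
Qed.

Lemma rmap_dsum_VI (I J : {set vtx}) u v i j : u \in I -> v \in I -> gle u v ->
  rmap (dsum (VI K I) (VI K J)) u v i j = ((i : nat) == j)%:R.
Proof.
move=> uI vI uv /=.
rewrite -[i]splitK -[j]splitK; case: (split i) => [i'|k]; case: (split j) => [j'|l] /=.
- by rewrite block_mxEul mxE uv (ord_bool i') (ord_bool j').
- by rewrite block_mxEur mxE (ord_bool i') /= vI.
- by rewrite block_mxEdl mxE (ord_bool j') /= uI.
- by rewrite block_mxEdr mxE uv /= uI vI (ord_bool k) (ord_bool l).
Qed.

Lemma is_rep_VI1 (S : {set vtx}) w : is_rep S (VI K [set w]).
Proof.
apply: is_rep_VI => x y z; rewrite !inE => /eqP -> /eqP -> wz zw.
by rewrite (gle_anti wz zw).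
Qed.

End Entrywise.

Section BrickMatrices.
Local Open Scope ring_scope.
Variable K : fieldType.

Notation bmx r c r' c' d d' :=
  (\matrix_(i < d, j < d') (brick_coef r c r' c' i j)%:R : 'M[K]_(d, d')).

Lemma brick_endo_scalar_mx (dc dw da db dt : nat) (ec : 'M[K]_dc) (ew : 'M_dw) (ea : 'M_da)
    (eb : 'M_db) (et : 'M_dt) :
  dc = 1%N -> dw = 2%N -> da = 1%N -> db = 1%N -> dt = 1%N ->
  bmx 1 0 1 1 dc dw *m ew = ec *m bmx 1 0 1 1 dc dw ->
  bmx 0 1 1 1 da dw *m ew = ea *m bmx 0 1 1 1 da dw ->
  bmx 1 1 1 2 dw dt *m et = ew *m bmx 1 1 1 2 dw dt ->
  bmx 0 1 0 2 da db *m eb = ea *m bmx 0 1 0 2 da db ->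
  bmx 0 2 1 2 db dt *m et = eb *m bmx 0 2 1 2 db dt ->
  exists x, [/\ ec = x%:M, ew = x%:M, ea = x%:M, eb = x%:M & et = x%:M].
Proof.
move=> ? ? ? ? ?; subst => Ecw Eaw Ewt Eab Ebt.
pose i0 : 'I_2 := ord0; pose i1 : 'I_2 := ord_max.
have cw0 := congr1 (fun M : 'M_(1,2) => M ord0 i0) Ecw.
have cw1 := congr1 (fun M : 'M_(1,2) => M ord0 i1) Ecw.
have aw0 := congr1 (fun M : 'M_(1,2) => M ord0 i0) Eaw.
have aw1 := congr1 (fun M : 'M_(1,2) => M ord0 i1) Eaw.
have wt0 := congr1 (fun M : 'M_(2,1) => M i0 ord0) Ewt.
have wt1 := congr1 (fun M : 'M_(2,1) => M i1 ord0) Ewt.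
have ab := congr1 (fun M : 'M_(1,1) => M ord0 ord0) Eab.
have bt := congr1 (fun M : 'M_(1,1) => M ord0 ord0) Ebt.
move: cw0 cw1 aw0 aw1 wt0 wt1 ab bt.
rewrite !mxE !big_ord_recl !big_ord0 !mxE /=.
have -> : lift ord0 (ord0 : 'I_1) = i1 by apply: val_inj.
rewrite /bump /brick_coef /= ?mul1r ?mulr1 ?mul0r ?mulr0 ?addr0 ?add0r.
move=> cw0 cw1 aw0 aw1 wt0 wt1 ab bt.
exists (et ord0 ord0).
have e11 : ew i1 i1 = et ord0 ord0.
  by move: aw1; rewrite cw1 add0r => ->; rewrite -aw0 -wt1 addr0 wt0.
split.
- by rewrite [ec]mx11_scalar -cw0 wt0.
- apply/matrixP => i j; rewrite !mxE.
  case: i => [[|[|i]] hi] //; case: j => [[|[|j]] hj] //=; rewrite ?mulr1n ?mulr0n.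
  + by rewrite wt0; congr (ew _ _); apply: val_inj.
  + by rewrite -cw1; congr (ew _ _); apply: val_inj.
  + by rewrite wt1; congr (ew _ _); apply: val_inj.
  + by rewrite -e11; congr (ew _ _); apply: val_inj.
- by rewrite [ea]mx11_scalar -aw0 -wt1 addr0 wt0.
- by rewrite [eb]mx11_scalar ab -aw0 -wt1 addr0 wt0.
- exact: mx11_scalar.
Qed.

Lemma mx_sqr0_le1 d (A : 'M[K]_d) : (d <= 1)%N -> A *m A = 0 -> A = 0.
Proof.
case: d A => [|[|d]] A // _; first by move=> _; apply: flatmx0.
rewrite [A]mx11_scalar -scalar_mxM => /matrixP /(_ ord0 ord0).
rewrite !mxE /= mulr1n => /eqP; rewrite mulf_eq0 orbb => /eqP ->.
by apply/matrixP => a b; rewrite !mxE mul0rn.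
Qed.

End BrickMatrices.

Section Brick.
Local Open Scope ring_scope.
Variables (K : fieldType) (m n : nat) (s : bool).
Hypotheses (rows_ge2 : (2 <= nrows m n s)%N) (cols_ge3 : (3 <= ncols m n s)%N).
Notation vtx := (vtx m n).
Notation win := (win s).
Notation wrow := (wrow s).
Notation wcol := (wcol s).
Notation wpt := (wpt rows_ge2 cols_ge3).
Implicit Types (u v : vtx).

Definition brick_rdim u : nat := if win u then brick_dim (wrow u) (wcol u) else 0.

Definition brick : rep K m n := @Rep K m n brick_rdim
  (fun u v => \matrix_(i, j) (brick_coef (wrow u) (wcol u) (wrow v) (wcol v) i j)%:R).

Lemma win_brick_rdim u : (0 < brick_rdim u)%N -> win u.
Proof. by rewrite /brick_rdim; case: (win u). Qed.

Lemma brick_rdimE u : win u -> brick_rdim u = brick_dim (wrow u) (wcol u).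
Proof. by rewrite /brick_rdim => ->. Qed.

Lemma is_rep_brick S : is_rep S brick.
Proof.
split=> [u _|u v w _ _ _ uv vw]; apply/matrixP => i j; rewrite !mxE.
  by rewrite /brick_coef !eqxx.
have wu : win u by apply: win_brick_rdim; exact: leq_ltn_trans (leq0n i) (ltn_ord i).
have wv := win_gle wu uv; have ww := win_gle wv vw.
under eq_bigr do rewrite !mxE.
have /andP [r12 c12] := gle_wcoord wu uv; have /andP [r23 c23] := gle_wcoord wv vw.
apply: brick_coef_comp; rewrite ?wrow_lt ?wcol_lt ?r12 ?c12 ?r23 ?c23 //.
- by rewrite -(brick_rdimE wu).
- by rewrite -(brick_rdimE ww).
- exact: brick_rdimE.
Qed.

Lemma wpt_rdim r c : (r < 2)%N -> (c < 3)%N -> brick_rdim (wpt r c) = brick_dim r c.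
Proof.
by move=> r2 c3; have [w rE cE] := wptE rows_ge2 cols_ge3 r2 c3; rewrite brick_rdimE // rE cE.
Qed.

Lemma gle_wpt r c r' c' : (r < 2)%N -> (c < 3)%N -> (r' < 2)%N -> (c' < 3)%N ->
  gle (wpt r c) (wpt r' c') = (r <= r')%N && (c <= c')%N.
Proof.
move=> r2 c3 r2' c3'; have [w rE cE] := wptE rows_ge2 cols_ge3 r2 c3.
by have [w' rE' cE'] := wptE rows_ge2 cols_ge3 r2' c3'; rewrite (gle_win w w') rE cE rE' cE'.
Qed.

Lemma arrow_wpt r c r' c' : (r < 2)%N -> (c < 3)%N -> (r' < 2)%N -> (c' < 3)%N ->
  arrow (wpt r c) (wpt r' c') = ((r == r') && (c.+1 == c')) || ((c == c') && (r.+1 == r')).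
Proof.
move=> r2 c3 r2' c3'; have [w rE cE] := wptE rows_ge2 cols_ge3 r2 c3.
by have [w' rE' cE'] := wptE rows_ge2 cols_ge3 r2' c3'; rewrite (arrow_win w w') rE cE rE' cE'.
Qed.

Lemma eq_wpt r c r' c' : (r < 2)%N -> (c < 3)%N -> (r' < 2)%N -> (c' < 3)%N ->
  (wpt r c == wpt r' c') = (r == r') && (c == c').
Proof.
move=> r2 c3 r2' c3'; have [w rE cE] := wptE rows_ge2 cols_ge3 r2 c3.
have [w' rE' cE'] := wptE rows_ge2 cols_ge3 r2' c3'.
apply/eqP/andP => [uv | [/eqP <- /eqP <-] //].
by have := congr1 wrow uv; have := congr1 wcol uv; rewrite rE cE rE' cE' => -> ->; rewrite !eqxx.
Qed.

Local Notation pa := (wpt 0 1).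
Local Notation pb := (wpt 0 2).
Local Notation pc := (wpt 1 0).
Local Notation pw := (wpt 1 1).
Local Notation pt := (wpt 1 2).

Definition brick_supp : {set vtx} := [set u | brick_rdim u != 0%N].

Lemma win_supp u : u \in brick_supp -> win u.
Proof. by rewrite inE => u_supp; apply: win_brick_rdim; rewrite lt0n. Qed.

Lemma brick_suppE : brick_supp = [set pa; pb; pc; pw; pt].
Proof.
apply/setP => u; rewrite !inE; apply/idP/idP => [dim_u|].
  have wu : win u by apply: win_brick_rdim; rewrite lt0n.
  rewrite (brick_rdimE wu) in dim_u.
  rewrite (win_wpt rows_ge2 cols_ge3 wu) !eq_wpt ?wrow_lt ?wcol_lt //.
  move: dim_u (wrow_lt wu) (wcol_lt wu).
  by case: (wrow u) => [|[|r]] //; case: (wcol u) => [|[|[|c]]].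
by rewrite -!orbA => /or4P [| | |/orP []] /eqP ->; rewrite wpt_rdim.
Qed.

Lemma brick_suppP u :
  reflect [\/ u = pa, u = pb, u = pc | u = pw \/ u = pt] (u \in brick_supp).
Proof.
rewrite brick_suppE !inE -!orbA.
apply: (iffP idP) => [|[| | |[]] ->]; rewrite ?eqxx ?orTb ?orbT //.
by case/or4P=> [| | |/orP []] /eqP ->;
  [apply: Or41 | apply: Or42 | apply: Or43 | apply: Or44; left | apply: Or44; right].
Qed.

Lemma brick_supp_gle u v : u \in brick_supp -> gle u v -> v \in brick_supp.
Proof.
move=> u_supp uv; have wu := win_supp u_supp; have wv := win_gle wu uv.
move: u_supp; rewrite !inE !brick_rdimE //.
move: (gle_wcoord wu uv) (wrow_lt wv) (wcol_lt wv).
by case: (wrow u) => [|[|?]] //; case: (wcol u) => [|[|[|?]]] //;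
  case: (wrow v) => [|[|?]] //; case: (wcol v) => [|[|[|?]]].
Qed.

Definition brick_supp_cut : {set vtx} := brick_supp :\ pa.

Lemma brick_supp_cut_gle u v : u \in brick_supp_cut -> gle u v -> v \in brick_supp_cut.
Proof.
rewrite !in_setD1 => /andP [u_pa u_supp] uv; rewrite (brick_supp_gle u_supp uv) andbT.
apply: contraNneq u_pa => v_pa; move: uv; rewrite v_pa.
by case/brick_suppP: u_supp => [| | |[]] ->; rewrite ?gle_wpt ?eqxx.
Qed.

Lemma is_interval_brick (I : {set vtx}) : I \subset brick_supp -> [set pb; pc; pw; pt] \subset I ->
  (forall x z, x \in I -> gle x z -> z \in I) -> is_interval I.
Proof.
move=> /subsetP I_supp /subsetP sub_I I_gle.
have [bI cI wI tI] : [/\ pb \in I, pc \in I, pw \in I & pt \in I].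
  by split; apply: sub_I; rewrite !inE eqxx ?orbT.
apply: (is_interval_up tI) I_gle => x xI.
pose R a b := [&& a \in I, b \in I & arrow a b || arrow b a].
have step y z : y \in I -> z \in I -> arrow y z -> connect R y z.
  by move=> yI zI yz; apply: connect1; rewrite /R yI zI yz.
have bt : connect R pb pt by apply: step; rewrite ?arrow_wpt.
have wt : connect R pw pt by apply: step; rewrite ?arrow_wpt.
case/brick_suppP: (I_supp x xI) => [| | |[]] xE; rewrite xE in xI *.
- by apply: connect_trans bt; apply: step; rewrite ?arrow_wpt.
- exact: bt.
- by apply: connect_trans wt; apply: step; rewrite ?arrow_wpt.
- exact: wt.
- exact: connect0.
Qed.

Lemma brick_rdim_supp u : u \in brick_supp -> brick_rdim u = (1 + (u == pw))%N.
Proof.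
by case/brick_suppP=> [| | |[]] ->; rewrite wpt_rdim // eq_wpt.
Qed.

Lemma brick_split (S I : {set vtx}) : S \subset I -> I \subset brick_supp ->
  (pa \notin S) || (pw \notin S) -> iso S brick (dsum (VI K I) (VI K [set pw])).
Proof.
move=> /subsetP SI /subsetP I_supp not_aw.
have S_supp u : u \in S -> u \in brick_supp by move/SI/I_supp.
apply: iso_entrywise => [u uS | u v uS vS uv i j i' j' ii' jj'].
  by rewrite /= brick_rdim_supp ?S_supp // SI // inE.
rewrite rmap_dsum_VI ?SI // mxE -ii' -jj'; congr (_%:R).
have wu := win_supp (S_supp u uS); have wv := win_supp (S_supp v vS).
have /andP [ruv cuv] := gle_wcoord wu uv.
have dim_u : brick_rdim u = brick_dim (wrow u) (wcol u) := brick_rdimE wu.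
have dim_v : brick_rdim v = brick_dim (wrow v) (wcol v) := brick_rdimE wv.
apply: brick_coef_delta; rewrite ?wrow_lt ?wcol_lt ?ruv ?cuv -?dim_u -?dim_v //.
- by have := S_supp u uS; rewrite inE.
- by have := S_supp v vS; rewrite inE.
apply/and4P => -[/eqP ru /eqP cu /eqP rv /eqP cv].
move: not_aw; rewrite (win_wpt rows_ge2 cols_ge3 wu) (win_wpt rows_ge2 cols_ge3 wv) in uS vS.
by rewrite ru cu rv cv in uS vS; rewrite uS vS.
Qed.

Lemma brick_endo_scalar (S : {set vtx}) e : brick_supp \subset S ->
  @is_mor K m n S brick brick e -> exists x, forall u, u \in brick_supp -> e u = x%:M.
Proof.
move=> /subsetP supp_S e_mor.
have [aS bS cS wS tS] : [/\ pa \in S, pb \in S, pc \in S, pw \in S & pt \in S].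
  by split; apply: supp_S; rewrite inE wpt_rdim.
have [_ ra ca] := wptE rows_ge2 cols_ge3 (isT : 0 < 2)%N (isT : 1 < 3)%N.
have [_ rb cb] := wptE rows_ge2 cols_ge3 (isT : 0 < 2)%N (isT : 2 < 3)%N.
have [_ rc cc] := wptE rows_ge2 cols_ge3 (isT : 1 < 2)%N (isT : 0 < 3)%N.
have [_ rw cw] := wptE rows_ge2 cols_ge3 (isT : 1 < 2)%N (isT : 1 < 3)%N.
have [_ rt ct] := wptE rows_ge2 cols_ge3 (isT : 1 < 2)%N (isT : 2 < 3)%N.
have Ecw := e_mor _ _ cS wS ltac:(by rewrite gle_wpt).
have Eaw := e_mor _ _ aS wS ltac:(by rewrite gle_wpt).
have Ewt := e_mor _ _ wS tS ltac:(by rewrite gle_wpt).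
have Eab := e_mor _ _ aS bS ltac:(by rewrite gle_wpt).
have Ebt := e_mor _ _ bS tS ltac:(by rewrite gle_wpt).
move: Ecw Eaw Ewt Eab Ebt; rewrite /= ra ca rb cb rc cc rw cw rt ct => Ecw Eaw Ewt Eab Ebt.
have [x [ec ew ea eb et]] := brick_endo_scalar_mx (wpt_rdim (isT : 1 < 2)%N (isT : 0 < 3)%N)
  (wpt_rdim (isT : 1 < 2)%N (isT : 1 < 3)%N) (wpt_rdim (isT : 0 < 2)%N (isT : 1 < 3)%N)
  (wpt_rdim (isT : 0 < 2)%N (isT : 2 < 3)%N) (wpt_rdim (isT : 1 < 2)%N (isT : 2 < 3)%N)
  Ecw Eaw Ewt Eab Ebt.
by exists x => u /brick_suppP [| | |[]] ->.
Qed.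

(* [p * i] is a scalar endomorphism of the brick of rank at most one at the centre, where
   the brick has dimension two, so it vanishes; then [i * p] squares to zero. *)
Lemma brick_null_through (S J : {set vtx}) : brick_supp \subset S -> VI_null_through S brick J.
Proof.
move=> supp_S i p i_mor p_mor u uS.
have [x ex] := brick_endo_scalar supp_S (is_mor_comp p_mor i_mor).
have w_supp : pw \in brick_supp by rewrite inE wpt_rdim.
have x0 : x = 0.
  apply/eqP; apply: contraT => x_neq0.
  have : (brick_rdim pw <= \rank (p pw *m i pw))%N.
    rewrite ex //; apply: (mulmx1_min_rank (M := x^-1%:M) (N := 1%:M)).
    by rewrite mulmx1 -scalar_mxM mulVf.
  rewrite wpt_rdim //; apply: contraLR => _; rewrite -ltnNge.
  apply: leq_ltn_trans (mxrankM_maxl _ _) _.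
  by apply: leq_ltn_trans (rank_leq_col _) _; rewrite ltnS leq_b1.
have pi0 : p u *m i u = 0.
  have [u_supp|u_supp] := boolP (u \in brick_supp); first by rewrite ex // x0 raddf0.
  move: u_supp (p u *m i u); rewrite inE negbK /= => /eqP -> A; exact: flatmx0.
apply: mx_sqr0_le1; first by rewrite leq_b1.
by rewrite mulmxA -(mulmxA (i u)) pi0 mulmx0 mul0mx.
Qed.

Lemma rowc_wpt r c : (r < 2)%N -> (c < 3)%N -> rowc s (wpt r c) = (nrows m n s - 2 + r)%N.
Proof. by move=> r2 c3; have [w rE _] := wptE rows_ge2 cols_ge3 r2 c3; rewrite rowcE // rE. Qed.

Lemma colc_wpt r c : (r < 2)%N -> (c < 3)%N -> colc s (wpt r c) = (ncols m n s - 3 + c)%N.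
Proof. by move=> r2 c3; have [w _ cE] := wptE rows_ge2 cols_ge3 r2 c3; rewrite colcE // cE. Qed.

Lemma pt_sink (J : {set vtx}) : pt \in J -> J \subset brick_supp -> pt \in sinks J.
Proof.
move=> tJ /subsetP J_supp; rewrite inE tJ; apply/exists_inP => -[y /J_supp].
by case/brick_suppP => [| | |[]] ->; rewrite arrow_wpt.
Qed.

Lemma brick_supp_sources : [set pa; pc] \subset sources brick_supp.
Proof.
have aU : pa \in brick_supp by rewrite inE wpt_rdim.
have cU : pc \in brick_supp by rewrite inE wpt_rdim.
apply/subsetP => x; rewrite in_set2 => /orP [] /eqP ->; rewrite [_ \in sources _]inE ?aU ?cU /=;
  by apply/exists_inP => -[y /brick_suppP [| | |[]] ->]; rewrite arrow_wpt.
Qed.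

Lemma pw_notin_ss_vert : pw \notin ss_vert brick_supp.
Proof.
have cU : pc \in brick_supp by rewrite inE wpt_rdim.
have tU : pt \in brick_supp by rewrite inE wpt_rdim.
rewrite in_setU ![_ \in [set _ in _ | _]]inE negb_or !negb_and !negbK.
by apply/andP; split; apply/orP; right; apply/exists_inP; [exists pc | exists pt];
  rewrite ?arrow_wpt.
Qed.

Lemma brick_supp_cc_vert : brick_supp \subset cc_vert brick_supp.
Proof.
have /subsetP src := brick_supp_sources.
have [aS cS] : pa \in ss_vert brick_supp /\ pc \in ss_vert brick_supp.
  by split; rewrite in_setU src ?in_set2 ?eqxx ?orbT.
have tS : pt \in ss_vert brick_supp.
  by rewrite in_setU pt_sink ?orbT // inE wpt_rdim.
apply/subsetP => x x_supp; apply: (cc_vert_rowc (s := s)) (x_supp) _ _.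
- case/brick_suppP: x_supp => [| | |[]] ->; [exists pa|exists pa|exists pc|exists pc|exists pt];
    by rewrite ?rowc_wpt.
- case/brick_suppP: x_supp => [| | |[]] ->; [exists pa|exists pt|exists pc|exists pa|exists pt];
    by rewrite ?colc_wpt.
Qed.

Lemma is_interval_brick_supp : is_interval brick_supp.
Proof.
apply: is_interval_brick => //; last exact: brick_supp_gle.
by apply/subsetP => x; rewrite !in_setU !in_set1 -!orbA => /or4P [] /eqP ->; rewrite inE wpt_rdim.
Qed.

Lemma is_interval_brick_supp_cut : is_interval brick_supp_cut.
Proof.
apply: is_interval_brick; [exact: subD1set | | exact: brick_supp_cut_gle].
apply/subsetP => x; rewrite !in_setU !in_set1 -!orbA => /or4P [] /eqP ->;
  by rewrite in_setD1 eq_wpt //= inE wpt_rdim.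
Qed.

Lemma dbar_brick_pow_out k l (J : {set vtx}) : ~~ (J \subset brick_supp) ->
  dbar k (dpow brick l) J = 0%N.
Proof.
case/subsetPn => x xJ x_supp; have [z z_src zx] := exists_source_le xJ.
apply: (@dbar_eq0_rdim _ _ _ _ _ _ z); first exact/is_rep_dpow/is_rep_brick.
  by apply: (subsetP (ss_vert_ess k J)); rewrite in_setU z_src.
have : z \notin brick_supp by apply: contra x_supp => /brick_supp_gle; apply.
by rewrite inE negbK rdim_dpow /= => /eqP ->; rewrite muln0.
Qed.

Lemma summand_pow_brick_pow (S I : {set vtx}) l : S \subset I -> I \subset brick_supp ->
  (pa \notin S) || (pw \notin S) -> summand_pow S (dpow brick l) (VI K I) l.
Proof.
move=> SI I_supp not_aw; exists (dpow (VI K [set pw]) l); split.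
  exact/is_rep_dpow/is_rep_VI1.
exact/iso_dpow_dsum/brick_split.
Qed.

Lemma dbar_brick_pow_supp_ss l : (l <= dbar SS (dpow brick l) brick_supp)%N.
Proof.
have tU : pt \in brick_supp by rewrite inE wpt_rdim.
apply: summand_pow_leq_dbar; first exact/is_rep_dpow/is_rep_brick.
  by apply/set0Pn; exists pt; rewrite in_setU pt_sink ?orbT.
apply: summand_pow_brick_pow; [exact: ess_subset | exact: subxx |].
by rewrite pw_notin_ss_vert orbT.
Qed.

Lemma dbar_brick_pow_cut k l : (l <= dbar k (dpow brick l) brick_supp_cut)%N.
Proof.
have tI : pt \in brick_supp_cut.
  by rewrite in_setD1 eq_wpt //= inE wpt_rdim.
apply: summand_pow_leq_dbar; first exact/is_rep_dpow/is_rep_brick.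
  apply/set0Pn; exists pt; apply: (subsetP (ss_vert_ess k _)).
  by rewrite in_setU pt_sink ?orbT ?subD1set.
apply: summand_pow_brick_pow; [exact: ess_subset | exact: subD1set |].
by apply/orP; left; apply/negP => /(subsetP (ess_subset k _)); rewrite /brick_supp_cut setD11.
Qed.

Lemma dbar_brick_pow_supp k l : k <> SS -> dbar k (dpow brick l) brick_supp = 0%N.
Proof.
move=> not_ss; have supp_ess : brick_supp \subset ess k brick_supp.
  by case: k not_ss => /= [[]|_|_] //; exact: brick_supp_cc_vert.
apply: dbar_eq0_null; first exact/is_rep_dpow/is_rep_brick.
  by apply/set0Pn; exists pt; apply: (subsetP supp_ess); rewrite inE wpt_rdim.
exact/VI_null_through_dpow/brick_null_through.
Qed.

Lemma brick_supp_cut_proper (J : {set vtx}) :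
  brick_supp_cut \proper J -> J \subset brick_supp -> J = brick_supp.
Proof.
case/properP=> /subsetP cutJ [y yJ y_cut] /subsetP J_supp.
apply/setP => x; apply/idP/idP => [/J_supp //|x_supp].
have [->|x_pa] := eqVneq x pa; last by apply: cutJ; rewrite in_setD1 x_pa.
by move: y_cut; rewrite in_setD1 J_supp // andbT negbK => /eqP <-.
Qed.

Lemma l1norm_dtilde_brick_pow k l : (l <= l1norm_dtilde k (dpow brick l))%N.
Proof.
have out (J : {set vtx}) : ~~ (J \subset brick_supp) -> dbar k (dpow brick l) J = 0%N.
  exact: dbar_brick_pow_out.
case: k out => out.
- apply: leq_trans (dbar_brick_pow_supp_ss l) _.
  apply: dbar_leq_l1norm_dtilde is_interval_brick_supp _ => J _.
  by rewrite properE => /andP [_ /out].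
all: apply: leq_trans (dbar_brick_pow_cut _ l) _.
all: apply: dbar_leq_l1norm_dtilde is_interval_brick_supp_cut _ => J _ cutJ.
all: have [J_supp|/out //] := boolP (J \subset brick_supp).
all: by rewrite (brick_supp_cut_proper cutJ J_supp) dbar_brick_pow_supp.
Qed.

Lemma VI_null_through_brick_pow l (J : {set vtx}) : VI_null_through setT (dpow brick l) J.
Proof. exact/VI_null_through_dpow/brick_null_through/subsetT. Qed.

End Brick.

Theorem mainTheorem18 (K : fieldType) (m n : nat) (k : ess_kind) (l : nat) :
  ((2 <= m) && (5 <= n) \/ (5 <= m) && (2 <= n))%N ->
  exists M : rep K m n, is_rep setT M /\
    (exists M' X : rep K m n, [/\ is_rep setT M', is_rep setT X,
        iso setT M (dsum M' X), interval_decomposable M' & no_interval_summand X]) /\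
    (forall M' X : rep K m n, is_rep setT M' -> is_rep setT X ->
        iso setT M (dsum M' X) -> interval_decomposable M' -> no_interval_summand X ->
        (l <= l1norm_dtilde k X)%N).
Proof.
move=> mn; have [s [rows_ge2 cols_ge3]] : exists s, (2 <= nrows m n s)%N /\ (3 <= ncols m n s)%N.
  by case: mn => /andP [? ?]; [exists false | exists true]; rewrite /nrows /ncols; split; lia.
pose M := dpow (brick K m n s) l.
have nM J : is_interval J -> VI_null_through setT M J.
  by move=> _; apply: VI_null_through_brick_pow.
have HM : is_rep setT M by exact/is_rep_dpow/is_rep_brick.
exists M; split=> //; split.
  exists (zero_rep K m n), M; split=> //; first exact: is_rep_zero.
  - exact: iso_dsum0r.
  - by exists [::]; split=> //; exact: iso_refl.
  - exact: no_interval_summand_null.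
move=> M' X _ _ iso_M M'_int _.
rewrite (l1norm_dtilde_iso k (iso_dsum_interval_decomposable nM iso_M M'_int)).
exact: l1norm_dtilde_brick_pow.
Qed.
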